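(* In the setting described in the context, the traces of the SLD quantum information matrices of the two schemes are $$\mathrm{tr}\{H^{(i)}_\theta\}=\frac4d\sum_{i=1}^{d-1}\sum_{j=1}^n\Bigl(\frac{\partial f_j(\theta_i)}{\partial\theta_i}\Bigr)^2,\qquad \mathrm{tr}\{H^{(ii)}_\theta\}=\frac4d\sum_{i=1}^{d-1}\Bigl(\sum_{j=1}^n\frac{\partial f_j(\theta_i)}{\partial\theta_i}\Bigr)^2.$$
   Context: Let $t_1,\dots,t_{d-1}$ be $d\times d$ matrices with $t_k=t_k^\dagger$, $\mathrm{tr}\{t_k\}=0$, $\mathrm{tr}\{t_kt_l\}=\delta_{kl}$ and $t_kt_l=t_lt_k$; let $\{|w_k\rangle\}_{k=1}^d$ be a common orthonormal eigenbasis and $|\psi_{sep}\rangle=\frac1{\sqrt d}\sum_{k=1}^d|w_k\rangle$. Let $f_1,\dots,f_n:\mathbb{R}\to\mathbb{R}$ be differentiable with $f_j'>0$ and $0\le\sum_jf_j(\theta_k)\le\pi$ for all $j,k$ and all $\theta$ in the parameter range. For $\theta=(\theta_1,\dots,\theta_{d-1})$ define $U^j_\theta=\exp\bigl(i\sum_{k=1}^{d-1}f_j(\theta_k)t_k\bigr)$, $j=1,\dots,n$. Scheme (i): each $U^j_\theta$ acts on its own copy of $|\psi_{sep}\rangle$, giving the product output state $\bigotimes_{j=1}^nU^j_\theta|\psi_{sep}\rangle$; scheme (ii): all channels act in sequence on one copy, giving $U^n_\theta\cdots U^1_\theta|\psi_{sep}\rangle$. $H^{(i)}_\theta$, $H^{(ii)}_\theta$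 denote the SLD quantum information matrices of the respective output families; for a pure family $|\psi_\theta\rangle$, $(H_\theta)_{mm'}=4\,\mathrm{Re}[\langle\partial_m\psi|\partial_{m'}\psi\rangle-\langle\partial_m\psi|\psi\rangle\langle\psi|\partial_{m'}\psi\rangle]$. *)

From HB Require Import structures.
From mathcomp Require Import all_boot all_order all_algebra.
From mathcomp Require Import all_classical all_reals all_analysis.
From mathcomp Require Import complex.
Set Implicit Arguments. Unset Strict Implicit. Unset Printing Implicit Defensive.
Import Order.TTheory GRing.Theory Num.Theory.
Import numFieldNormedType.Exports.
Local Open Scope ring_scope.


Definition adjmx {R : realType} (m n : nat) (A : 'M[R[i]]_(m, n)) : 'M[R[i]]_(n, m) :=
  map_mx (@conjc R) A^T.

Definition mxexp_partial {R : realType} (d : nat) (A : 'M[R[i]]_d) (N : nat) : 'M[R[i]]_d :=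
  \sum_(k < N) ((k`!)%:R)^-1 *: (A ^+ k).

Definition mxexp {R : realType} (d : nat) (A : 'M[R[i]]_d) : 'M[R[i]]_d :=
  \matrix_(a, b) Complex
     (limn (fun N => (complex.Re (mxexp_partial A N a b) : R)))
     (limn (fun N => (complex.Im (mxexp_partial A N a b) : R))).

Definition braket {R : realType} (I : finType) (u v : I -> R[i]) : R[i] :=
  \sum_(x : I) conjc (u x) * v x.

Definition shift {R : realType} (p : nat) (theta : 'rV[R]_p) (m : 'I_p) (s : R) : 'rV[R]_p :=
  \row_k (theta 0 k + (if k == m then s else 0)).

Definition pderiv {R : realType} (p : nat) (I : finType) (psi : 'rV[R]_p -> I -> R[i])
    (theta : 'rV[R]_p) (m : 'I_p) : I -> R[i] :=
  fun x => Complex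
    (derive1 (fun s : R => (complex.Re (psi (shift theta m s) x) : R)) 0)
    (derive1 (fun s : R => (complex.Im (psi (shift theta m s) x) : R)) 0).

Definition sld_qfi {R : realType} (p : nat) (I : finType) (psi : 'rV[R]_p -> I -> R[i])
    (theta : 'rV[R]_p) : 'M[R]_p :=
  \matrix_(m, m')
    (4 * complex.Re (braket (pderiv psi theta m) (pderiv psi theta m')
        - braket (pderiv psi theta m) (psi theta)
          * braket (psi theta) (pderiv psi theta m'))).

Definition chanU {R : realType} (d : nat) (t : 'I_(d.-1) -> 'M[R[i]]_d) (fj : R -> R)
    (theta : 'rV[R]_(d.-1)) : 'M[R[i]]_d :=
  mxexp ((Complex 0 1) *: \sum_(k < d.-1) (real_complex R (fj (theta 0 k))) *: t k).

Definition psi_sep {R : realType} (d : nat) (w : 'I_d -> 'cV[R[i]]_d) : 'cV[R[i]]_d :=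
  real_complex R (Num.sqrt (d%:R : R))^-1 *: \sum_(a < d) w a.

(* scheme (i): product state  (x) _j U^j |psi_sep>, indexed by 'I_n -> 'I_d *)
Definition out_parallel {R : realType} (d n : nat) (t : 'I_(d.-1) -> 'M[R[i]]_d)
    (f : 'I_n -> R -> R) (w : 'I_d -> 'cV[R[i]]_d)
    (theta : 'rV[R]_(d.-1)) : {ffun 'I_n -> 'I_d} -> R[i] :=
  fun x => \prod_(j < n) ((chanU t (f j) theta *m psi_sep w) (x j) 0).

Definition out_sequential {R : realType} (d n : nat) (t : 'I_(d.-1) -> 'M[R[i]]_d)
    (f : 'I_n -> R -> R) (w : 'I_d -> 'cV[R[i]]_d)
    (theta : 'rV[R]_(d.-1)) : 'I_d -> R[i] :=
  fun a => ((\prod_(j < n) chanU t (f (rev_ord j)) theta) *m psi_sep w) a 0.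

(* Every generator t_k is diagonal in the common eigenbasis w, with real
   eigenvalues mu_(k,a); the trace conditions give sum_a mu_(k,a) = 0 and
   sum_a mu_(k,a)^2 = 1.  Hence U^j_theta multiplies w_a by the phase
   exp(i sum_k f_j(theta_k) mu_(k,a)), so each factor of the output of scheme (i),
   and the output of scheme (ii) for the function sum_j f_j, is a phase state
   d^(-1/2) sum_a exp(i phi_a(theta)) w_a.  The derivative of such a state in
   theta_m is orthogonal to it (as sum_a mu_(m,a) = 0) and has squared norm
   F'(theta_m)^2 / d (as sum_a mu_(m,a)^2 = 1); for the product state of
   scheme (i) the diagonal entries of the information matrix add up over the
   factors. *)

From Pilot Require Import Defs.
From HB Require Import structures.
From mathcomp Require Import all_boot all_order all_algebra.
From mathcomp Require Import all_classical all_reals all_analysis.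
From mathcomp Require Import complex ring lra.
Import Order.TTheory GRing.Theory Num.Theory.
Import numFieldNormedType.Exports.
Local Open Scope ring_scope.
Local Open Scope complex_scope.
Local Open Scope classical_set_scope.

Section PhaseEncoding.
Variable R : realType.
Local Notation C := R[i].
Local Notation Re := (@complex.Re R).
Local Notation Im := (@complex.Im R).

Lemma Re_add (z w : C) : Re (z + w) = Re z + Re w.
Proof. by case: z => a b; case: w. Qed.

Lemma Im_add (z w : C) : Im (z + w) = Im z + Im w.
Proof. by case: z => a b; case: w. Qed.

Lemma Re_mul (z w : C) : Re (z * w) = Re z * Re w - Im z * Im w.
Proof. by case: z => a b; case: w => c e; simpc. Qed.

Lemma Im_mul (z w : C) : Im (z * w) = Re z * Im w + Im z * Re w.
Proof. by case: z => a b; case: w => c e; simpc; rewrite addrC. Qed.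

Lemma Re_realM (x : R) (z : C) : Re (x%:C * z) = x * Re z.
Proof. by rewrite Re_mul /= mul0r subr0. Qed.

Lemma Im_realM (x : R) (z : C) : Im (x%:C * z) = x * Im z.
Proof. by rewrite Im_mul /= mul0r addr0. Qed.

Lemma Re_sum (I : Type) (r : seq I) (F : I -> C) :
  Re (\sum_(i <- r) F i) = \sum_(i <- r) Re (F i).
Proof. by rewrite (raddf_sum (@complex.Re R : Rcomplex R -> R)). Qed.

Lemma Im_sum (I : Type) (r : seq I) (F : I -> C) :
  Im (\sum_(i <- r) F i) = \sum_(i <- r) Im (F i).
Proof. by rewrite (raddf_sum (@complex.Im R : Rcomplex R -> R)). Qed.

Lemma conjc_realM (x : R) (z : C) : (x%:C * z)^*%C = x%:C * z^*%C.
Proof. by case: z => a b; simpc. Qed.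

Lemma conjc_iRM (x : R) (z : C) : ('i * x%:C * z)^*%C = - 'i * x%:C * z^*%C.
Proof. by case: z => a b; simpc. Qed.

Lemma conjc_id_real {z : C} : z^*%C = z -> z = (Re z)%:C.
Proof. by case: z => a b /= [] hb; apply/eqP; rewrite eq_complex /= eqxx; lra. Qed.

Definition expi (p : R) : C := Complex (cos p) (sin p).

Lemma conjc_expiM p : (expi p)^*%C * expi p = 1.
Proof.
rewrite /expi; simpc; apply/eqP; rewrite eq_complex /= -!expr2 cos2Dsin2 eqxx /=.
by rewrite mulrC subrr.
Qed.

Lemma expiD p q : expi (p + q) = expi p * expi q.
Proof. by rewrite /expi cosD sinD; simpc; congr Complex; ring. Qed.

Lemma expi_sum (I : Type) (r : seq I) (F : I -> R) :
  expi (\sum_(i <- r) F i) = \prod_(i <- r) expi (F i).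
Proof.
apply: (big_morph _ expiD).
by apply/eqP; rewrite eq_complex /= cos0 sin0 !eqxx.
Qed.

(* Convergence in R[i] is taken componentwise, as in the definition of [mxexp]. *)
Definition ccvg (u : nat -> C) (l : C) :=
  (fun N => Re (u N)) @ \oo --> Re l /\ (fun N => Im (u N)) @ \oo --> Im l.

Lemma ccvg_lim u l : ccvg u l ->
  Complex (limn (fun N => Re (u N))) (limn (fun N => Im (u N))) = l.
Proof.
by case=> hRe hIm; rewrite (cvg_lim _ hRe) ?(cvg_lim _ hIm) //; case: l hRe hIm.
Qed.

Lemma ccvg_sum (I : Type) (r : seq I) (u : I -> nat -> C) (l : I -> C) :
  (forall i, ccvg (u i) (l i)) ->
  ccvg (fun N => \sum_(i <- r) u i N) (\sum_(i <- r) l i).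
Proof.
move=> hu; elim: r => [|i r [ihRe ihIm]].
  have -> : (fun N => \sum_(i <- [::]) u i N) = fun=> 0.
    by apply/funext => N; rewrite big_nil.
  by rewrite big_nil; split; apply: cvg_cst.
have -> : (fun N => \sum_(j <- i :: r) u j N) = fun N => u i N + \sum_(j <- r) u j N.
  by apply/funext => N; rewrite big_cons.
have [uRe uIm] := hu i; rewrite big_cons; split.
  by rewrite Re_add; under eq_fun do rewrite Re_add; apply: cvgD.
by rewrite Im_add; under eq_fun do rewrite Im_add; apply: cvgD.
Qed.

Lemma ccvgMl (a : C) u l : ccvg u l -> ccvg (fun N => a * u N) (a * l).
Proof.
case=> hRe hIm; split.
  rewrite Re_mul; under eq_fun do rewrite Re_mul.
  by apply: cvgB; apply: cvgM => //; apply: cvg_cst.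
rewrite Im_mul; under eq_fun do rewrite Im_mul.
by apply: cvgD; apply: cvgM => //; apply: cvg_cst.
Qed.

Lemma ccvgMr (b : C) u l : ccvg u l -> ccvg (fun N => u N * b) (l * b).
Proof.
move=> /(ccvgMl b); rewrite mulrC.
by have -> : (fun N => b * u N) = fun N => u N * b by apply/funext => N; rewrite mulrC.
Qed.

Lemma iX_half k : 'i ^+ k = ((-1) ^+ k./2)%:C * 'i ^+ odd k :> C.
Proof.
by rewrite -[in LHS](odd_double_half k) exprD -mul2n exprM sqr_i rmorphXn rmorphN1 mulrC.
Qed.

Lemma Re_iX k : Re ('i ^+ k : C) = (~~ odd k)%:R * (-1) ^+ k./2.
Proof.
by rewrite iX_half Re_realM; case: (odd k); rewrite /= ?mulr0 ?mul0r ?mulr1 ?mul1r.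
Qed.

Lemma Im_iX k : Im ('i ^+ k : C) = (odd k)%:R * (-1) ^+ k.-1./2.
Proof.
rewrite iX_half Im_realM; case ok: (odd k); rewrite /= ?mulr0 ?mul0r //.
by rewrite mulr1 mul1r -[k in RHS]odd_double_half ok add1n /= doubleK.
Qed.

Lemma ccvg_expi (p : R) :
  ccvg (fun N => \sum_(k < N) (k`!%:R)^-1 * ('i * p%:C) ^+ k) (expi p).
Proof.
have term k : (k`!%:R : C)^-1 * ('i * p%:C) ^+ k = ((k`!%:R)^-1 * p ^+ k)%:C * 'i ^+ k.
  by rewrite exprMn rmorphM rmorphXn fmorphV rmorph_nat; ring.
split.
- have -> : (fun N => Re (\sum_(k < N) (k`!%:R)^-1 * ('i * p%:C) ^+ k))
      = series (cos_coeff p).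
    apply/funext => N; rewrite Re_sum /series /= big_mkord; apply: eq_bigr => k _.
    by rewrite term Re_realM Re_iX /cos_coeff /= -?exprnP; ring.
  by rewrite /= unlock; exact: is_cvg_series_cos_coeff.
- have -> : (fun N => Im (\sum_(k < N) (k`!%:R)^-1 * ('i * p%:C) ^+ k))
      = series (sin_coeff p).
    apply/funext => N; rewrite Im_sum /series /= big_mkord; apply: eq_bigr => k _.
    by rewrite term Im_realM Im_iX /sin_coeff /= -?exprnP; ring.
  by rewrite /= unlock; exact: is_cvg_series_sin_coeff.
Qed.

Definition is_cderive (x : R) (g : R -> C) (dg : C) :=
  is_derive x 1 (fun s => Re (g s)) (Re dg) /\ is_derive x 1 (fun s => Im (g s)) (Im dg).

Lemma is_cderive_eq {x g dg dg'} : is_cderive x g dg -> dg = dg' -> is_cderive x g dg'.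
Proof. by move=> ? <-. Qed.

Lemma is_cderive_cst x (c : C) : is_cderive x (fun=> c) 0.
Proof. by split; apply: is_derive_cst. Qed.

Lemma is_cderiveD {x g h dg dh} : is_cderive x g dg -> is_cderive x h dh ->
  is_cderive x (fun s => g s + h s) (dg + dh).
Proof.
move=> [gRe gIm] [hRe hIm]; split.
  have -> : (fun s => Re (g s + h s)) = (fun s => Re (g s)) + (fun s => Re (h s)).
    by apply/funext => s; rewrite Re_add.
  by rewrite Re_add; apply: is_deriveD.
have -> : (fun s => Im (g s + h s)) = (fun s => Im (g s)) + (fun s => Im (h s)).
  by apply/funext => s; rewrite Im_add.
by rewrite Im_add; apply: is_deriveD.
Qed.

Lemma is_cderiveM {x g h dg dh} : is_cderive x g dg -> is_cderive x h dh ->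
  is_cderive x (fun s => g s * h s) (dg * h x + g x * dh).
Proof.
move=> [gRe gIm] [hRe hIm]; split.
  have -> : (fun s => Re (g s * h s)) = (fun s => Re (g s)) * (fun s => Re (h s))
      - (fun s => Im (g s)) * (fun s => Im (h s)).
    by apply/funext => s; rewrite Re_mul.
  apply: (is_derive_eq (is_deriveB (is_deriveM gRe hRe) (is_deriveM gIm hIm))).
  by rewrite /= Re_add !Re_mul /GRing.scale /=; ring.
have -> : (fun s => Im (g s * h s)) = (fun s => Re (g s)) * (fun s => Im (h s))
    + (fun s => Im (g s)) * (fun s => Re (h s)).
  by apply/funext => s; rewrite Im_mul.
apply: (is_derive_eq (is_deriveD (is_deriveM gRe hIm) (is_deriveM gIm hRe))).
by rewrite /= Im_add !Im_mul /GRing.scale /=; ring.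
Qed.

Lemma is_cderive_sum x (I : Type) (r : seq I) (g : I -> R -> C) (dg : I -> C) :
  (forall i, is_cderive x (g i) (dg i)) ->
  is_cderive x (fun s => \sum_(i <- r) g i s) (\sum_(i <- r) dg i).
Proof.
move=> hg; elim: r => [|i r ih].
  have -> : (fun s => \sum_(i <- [::]) g i s) = fun=> 0.
    by apply/funext => s; rewrite big_nil.
  by rewrite big_nil; apply: is_cderive_cst.
have -> : (fun s => \sum_(j <- i :: r) g j s) = fun s => g i s + \sum_(j <- r) g j s.
  by apply/funext => s; rewrite big_cons.
by rewrite big_cons; apply: is_cderiveD.
Qed.

Lemma is_cderive_prod x n (g : 'I_n -> R -> C) (dg : 'I_n -> C) :
  (forall j, is_cderive x (g j) (dg j)) ->
  is_cderive x (fun s => \prod_(j < n) g j s)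
    (\sum_(j < n) \prod_(j' < n) (if j' == j then dg j' else g j' x)).
Proof.
elim: n g dg => [|n ih] g dg hg.
  have -> : (fun s => \prod_(j < 0) g j s) = fun=> 1.
    by apply/funext => s; rewrite big_ord0.
  by rewrite big_ord0; apply: is_cderive_cst.
pose widen := widen_ord (leqnSn n).
have hlast := is_cderiveM (ih (g \o widen) (dg \o widen) (fun j => hg _)) (hg ord_max).
have -> : (fun s => \prod_(j < n.+1) g j s)
    = fun s => (\prod_(j < n) (g \o widen) j s) * g ord_max s.
  by apply/funext => s; rewrite big_ord_recr.
apply: (is_cderive_eq hlast).
rewrite big_ord_recr /= big_distrl /= big_ord_recr /= eqxx; congr (_ + _).
  apply: eq_bigr => j _; rewrite big_ord_recr /=.
  rewrite ifN_eq; last by rewrite neq_ltn /= ltn_ord orbT.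
  by congr (_ * _); apply: eq_bigr => j' _.
congr (_ * _); apply: eq_bigr => j' _.
by rewrite ifN_eq // neq_ltn /= ltn_ord.
Qed.

Lemma is_cderive_expi {x : R} {phi : R -> R} {dphi : R} : is_derive x 1 phi dphi ->
  is_cderive x (fun s => expi (phi s)) ('i * dphi%:C * expi (phi x)).
Proof.
move=> hphi; split.
  apply: (is_derive_eq (is_derive1_comp (is_derive_cos _) hphi)).
  by simpc; rewrite /=; ring.
apply: (is_derive_eq (is_derive1_comp (is_derive_sin _) hphi)).
by simpc; rewrite /=; ring.
Qed.

Lemma shift0 p (theta : 'rV[R]_p) m : Defs.shift theta m 0 = theta.
Proof. by apply/rowP => k; rewrite mxE if_same addr0. Qed.

Lemma pderivE p (I : finType) (psi : 'rV[R]_p -> I -> C) theta m (D : I -> C) :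
  (forall x, is_cderive 0 (fun s => psi (Defs.shift theta m s) x) (D x)) ->
  pderiv psi theta m = D.
Proof.
move=> hD; apply/funext => x; have [hRe hIm] := hD x.
by rewrite /pderiv !derive1E !derive_val; case: (D x).
Qed.

Lemma is_derive_shift_phase {p} {F : R -> R} {dF : R} {theta : 'rV[R]_p} {m}
    (c : 'I_p -> R) :
  is_derive (theta 0 m) 1 F dF ->
  is_derive (0 : R) 1 (fun s => \sum_k F (Defs.shift theta m s 0 k) * c k) (dF * c m).
Proof.
move=> hF.
have hFm : is_derive (0 : R) 1 (fun s => F (s + theta 0 m)) dF.
  rewrite -[dF]mulr1; apply: is_derive1_comp; last exact: is_derive_shift.
  by rewrite /= add0r.
have -> : (fun s => \sum_k F (Defs.shift theta m s 0 k) * c k)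
    = (fun s => F (s + theta 0 m)) * cst (c m)
      + cst (\sum_(k | k != m) F (theta 0 k) * c k).
  apply/funext => s; rewrite (bigD1 m) //= mxE eqxx; congr (_ + _).
    by rewrite addrC.
  by apply: eq_bigr => k /negbTE hk; rewrite mxE hk addr0.
apply: (is_derive_eq (is_deriveD (is_deriveM hFm (is_derive_cst _ _ _))
  (is_derive_cst _ _ _))).
by rewrite /= /GRing.scale /=; ring.
Qed.

Lemma braketZr (I : finType) (u v : I -> C) (c : C) :
  braket u (fun x => c * v x) = c * braket u v.
Proof. by rewrite /braket big_distrr; apply: eq_bigr => x _; rewrite mulrCA. Qed.

Lemma braketZl (I : finType) (u v : I -> C) (c : C) :
  braket (fun x => c * u x) v = c^*%C * braket u v.
Proof. by rewrite /braket big_distrr; apply: eq_bigr => x _; rewrite rmorphM -mulrA. Qed.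

Lemma braket_suml (I J : finType) (u : J -> I -> C) (v : I -> C) :
  braket (fun x => \sum_j u j x) v = \sum_j braket (u j) v.
Proof.
rewrite /braket exchange_big /=; apply: eq_bigr => x _.
by rewrite rmorph_sum big_distrl.
Qed.

Lemma braket_sumr (I J : finType) (u : I -> C) (v : J -> I -> C) :
  braket u (fun x => \sum_j v j x) = \sum_j braket u (v j).
Proof. by rewrite /braket exchange_big /=; apply: eq_bigr => x _; rewrite big_distrr. Qed.

Lemma braket_prod n (I : finType) (u v : 'I_n -> I -> C) :
  braket (fun x : {ffun 'I_n -> I} => \prod_j u j (x j)) (fun x => \prod_j v j (x j))
  = \prod_j braket (u j) (v j).
Proof.
rewrite /braket bigA_distr_bigA /=; apply: eq_bigr => x _.
by rewrite rmorph_prod -big_split.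
Qed.

Lemma sld_qfi_diag {p} {I : finType} {psi : 'rV[R]_p -> I -> C} {theta m} {D : I -> C} :
  pderiv psi theta m = D -> braket D (psi theta) = 0 ->
  sld_qfi psi theta m m = 4 * Re (braket D D).
Proof. by move=> hD hDpsi; rewrite mxE hD hDpsi mul0r subr0. Qed.

Lemma sld_qfi_prod_diag {p n} {I : finType} {phi : 'I_n -> 'rV[R]_p -> I -> C}
    {D : 'I_n -> I -> C} {theta m} :
  (forall j x, is_cderive 0 (fun s => phi j (Defs.shift theta m s) x) (D j x)) ->
  (forall j, braket (phi j theta) (phi j theta) = 1) ->
  (forall j, braket (D j) (phi j theta) = 0) ->
  sld_qfi (fun th (x : {ffun 'I_n -> I}) => \prod_j phi j th (x j)) theta m m
    = 4 * \sum_j Re (braket (D j) (D j)).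
Proof.
move=> hD hnorm horth.
pose leib j j' := if j' == j then D j' else phi j' theta.
have hpd : pderiv (fun th (x : {ffun 'I_n -> I}) => \prod_j phi j th (x j)) theta m
    = fun x => \sum_j \prod_j' leib j j' (x j').
  apply: pderivE => x.
  apply: is_cderive_eq; first exact: is_cderive_prod (fun j => hD j (x j)).
  apply: eq_bigr => j _; apply: eq_bigr => j' _.
  by rewrite /leib shift0; case: eqP.
have leib_orth j l : l != j ->
    braket (fun x : {ffun 'I_n -> I} => \prod_j' leib j j' (x j'))
      (fun x => \prod_j' leib l j' (x j')) = 0.
  move=> hlj; rewrite braket_prod (bigD1 j) //= /leib eqxx eq_sym (negbTE hlj).
  by rewrite horth mul0r.
rewrite (sld_qfi_diag hpd).
  rewrite braket_suml Re_sum; congr (_ * _); apply: eq_bigr => j _.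
  rewrite braket_sumr (bigD1 j) //= big1 ?addr0 => [|l hl]; last exact: leib_orth.
  rewrite braket_prod (bigD1 j) //= big1 ?mulr1 => [|j' hj']; first by rewrite /leib eqxx.
  by rewrite /leib (negbTE hj') hnorm.
rewrite braket_suml big1 // => j _ /=.
rewrite (braket_prod _ _ (leib j) (fun j => phi j theta)) (bigD1 j) //=.
by rewrite /leib eqxx horth mul0r.
Qed.

Lemma braket_adjmx d (A : 'M[C]_d) (u v : 'cV[C]_d) :
  braket (fun r => u r 0) (fun r => (A *m v) r 0)
  = braket (fun r => (adjmx A *m u) r 0) (fun r => v r 0).
Proof.
rewrite /braket; under eq_bigr do rewrite mxE big_distrr.
under [RHS]eq_bigr do rewrite mxE rmorph_sum big_distrl.
rewrite exchange_big; apply: eq_bigr => s _; apply: eq_bigr => r _ /=.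
by rewrite /adjmx !mxE rmorphM /= conjcK; ring.
Qed.

Lemma mulmx_prod_eigen {d} {I : Type} {r : seq I} {M : I -> 'M[C]_d} {v : 'cV[C]_d}
    {c : I -> C} :
  (forall i, M i *m v = c i *: v) -> (\prod_(i <- r) M i) *m v = (\prod_(i <- r) c i) *: v.
Proof.
move=> hM; elim: r => [|i r ih]; first by rewrite !big_nil -idmxE mul1mx scale1r.
by rewrite !big_cons -mulmxE -mulmxA ih -scalemxAr hM scalerA mulrC.
Qed.

Lemma mulmx_exprn_eigen {d} {A : 'M[C]_d} {v : 'cV[C]_d} {c : C} k :
  A *m v = c *: v -> A ^+ k *m v = c ^+ k *: v.
Proof.
move=> hA; elim: k => [|k ih]; first by rewrite !expr0 -idmxE mul1mx scale1r.
by rewrite exprSr -mulmxE -mulmxA hA -scalemxAr ih scalerA -exprS.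
Qed.

Section OrthonormalBasis.
Variables (d : nat) (w : 'I_d -> 'cV[C]_d).
Hypothesis w_orthonormal :
  forall a b, braket (fun r => w a r 0) (fun r => w b r 0) = (a == b)%:R.

Definition basis_mx : 'M[C]_d := \matrix_(y, a) w a y 0.
Local Notation W := basis_mx.

Lemma basis_mx_unitary : adjmx W *m W = 1%:M.
Proof.
apply/matrixP => a b; rewrite !mxE -w_orthonormal /braket; apply: eq_bigr => y _.
by rewrite /adjmx !mxE.
Qed.

Lemma basis_mx_unitaryC : W *m adjmx W = 1%:M.
Proof. exact: mulmx1C basis_mx_unitary. Qed.

Lemma mulmx_basis_mxE (A : 'M[C]_d) y a : (A *m W) y a = (A *m w a) y 0.
Proof. by rewrite !mxE; apply: eq_bigr => b _; rewrite mxE. Qed.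

Lemma eigen_basis_mxP (A : 'M[C]_d) (D : 'rV[C]_d) :
  (forall a, A *m w a = D 0 a *: w a) <-> A *m W = W *m diag_mx D.
Proof.
have WD y a : (W *m diag_mx D) y a = (D 0 a *: w a) y 0 by rewrite mul_mx_diag !mxE mulrC.
split=> [hA | hA a]; first by apply/matrixP => y a; rewrite mulmx_basis_mxE hA WD.
by apply/colP => y; rewrite -mulmx_basis_mxE hA WD.
Qed.

Definition diag_in_basis (D : 'rV[C]_d) : 'M[C]_d := W *m diag_mx D *m adjmx W.

Lemma diag_in_basisE D y b :
  diag_in_basis D y b = \sum_a w a y 0 * D 0 a * (w a b 0)^*%C.
Proof. by rewrite mxE; apply: eq_bigr => a _; rewrite mul_mx_diag /adjmx !mxE. Qed.

Lemma diag_in_basis_eigen {A : 'M[C]_d} {D : 'rV[C]_d} :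
  (forall a, A *m w a = D 0 a *: w a) -> A = diag_in_basis D.
Proof.
by move=> /eigen_basis_mxP hA; rewrite /diag_in_basis -hA -mulmxA basis_mx_unitaryC mulmx1.
Qed.

Lemma diag_in_basis_mulw D a : diag_in_basis D *m w a = D 0 a *: w a.
Proof.
by move: a; apply/eigen_basis_mxP; rewrite /diag_in_basis -mulmxA basis_mx_unitary mulmx1.
Qed.

Lemma diag_in_basisM D1 D2 :
  diag_in_basis D1 *m diag_in_basis D2 = diag_in_basis (\row_a (D1 0 a * D2 0 a)).
Proof.
apply: diag_in_basis_eigen => a.
by rewrite -mulmxA !diag_in_basis_mulw -scalemxAr diag_in_basis_mulw scalerA mxE mulrC.
Qed.

Lemma mxtrace_diag_in_basis D : \tr (diag_in_basis D) = \sum_a D 0 a.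
Proof. by rewrite mxtrace_mulC mulmxA basis_mx_unitary mul1mx mxtrace_diag. Qed.

Lemma mxexp_partial_diag_in_basis D N :
  mxexp_partial (diag_in_basis D) N
  = diag_in_basis (\row_a \sum_(k < N) (k`!%:R)^-1 * D 0 a ^+ k).
Proof.
apply: diag_in_basis_eigen => a; rewrite mulmx_suml mxE scaler_suml.
apply: eq_bigr => k _.
by rewrite -scalemxAl (mulmx_exprn_eigen k (diag_in_basis_mulw D a)) scalerA.
Qed.

Lemma mxexp_diag_in_basis (ph : 'I_d -> R) :
  mxexp (diag_in_basis (\row_a ('i * (ph a)%:C))) = diag_in_basis (\row_a expi (ph a)).
Proof.
apply/matrixP => y b; rewrite mxE; apply: ccvg_lim; rewrite diag_in_basisE.
have -> : (fun N => mxexp_partial (diag_in_basis (\row_a ('i * (ph a)%:C))) N y b)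
    = fun N => \sum_a w a y 0 * (\sum_(k < N) (k`!%:R)^-1 * ('i * (ph a)%:C) ^+ k)
                 * (w a b 0)^*%C.
  by apply/funext => N; rewrite mxexp_partial_diag_in_basis diag_in_basisE;
    apply: eq_bigr => a _; rewrite !mxE.
by apply: ccvg_sum => a; rewrite mxE; apply/ccvgMr/ccvgMl/ccvg_expi.
Qed.

Lemma braket_basis (al be : 'I_d -> C) :
  braket (fun y => \sum_a al a * w a y 0) (fun y => \sum_a be a * w a y 0)
  = \sum_a (al a)^*%C * be a.
Proof.
rewrite braket_suml; apply: eq_bigr => a _.
rewrite braket_sumr (bigD1 a) //= big1 ?addr0 => [|b hb].
  by rewrite braketZl braketZr w_orthonormal eqxx mulr1.
by rewrite braketZl braketZr w_orthonormal eq_sym (negbTE hb) !mulr0.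
Qed.

Section Generators.
Variable t : 'I_(d.-1) -> 'M[C]_d.
Hypothesis t_herm : forall k, adjmx (t k) = t k.
Hypothesis t_tr0 : forall k, \tr (t k) = 0.
Hypothesis t_orthonormal : forall k l, \tr (t k *m t l) = (k == l)%:R.
Hypothesis w_eigen : forall k a, exists lam : C, t k *m w a = lam *: w a.

Definition eigval k a : R :=
  Re (braket (fun r => w a r 0) (fun r => (t k *m w a) r 0)).

Lemma eigvalP k a : t k *m w a = (eigval k a)%:C *: w a.
Proof.
have [lam hlam] := w_eigen k a.
have colZ (c : C) : (fun r => (c *: w a) r 0) = fun r => c * w a r 0.
  by apply/funext => r; rewrite mxE.
have lamE : braket (fun r => w a r 0) (fun r => (t k *m w a) r 0) = lam.
  by rewrite hlam colZ braketZr w_orthonormal eqxx mulr1.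
have lam_real : lam^*%C = lam.
  by rewrite -[in RHS]lamE braket_adjmx t_herm hlam colZ braketZl w_orthonormal eqxx mulr1.
by rewrite /eigval lamE -(conjc_id_real lam_real).
Qed.

Lemma generator_diag k : t k = diag_in_basis (\row_a (eigval k a)%:C).
Proof. by apply: diag_in_basis_eigen => a; rewrite mxE eigvalP. Qed.

Lemma sum_eigval k : \sum_a eigval k a = 0.
Proof.
have := t_tr0 k; rewrite generator_diag mxtrace_diag_in_basis.
by under eq_bigr do rewrite mxE; rewrite -rmorph_sum => -[].
Qed.

Lemma sum_eigval_sqr k : \sum_a eigval k a ^+ 2 = 1.
Proof.
have := t_orthonormal k k.
rewrite eqxx generator_diag diag_in_basisM mxtrace_diag_in_basis.
by under eq_bigr do rewrite !mxE -rmorphM -expr2; rewrite -rmorph_sum => -[].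
Qed.

Definition phase (F : R -> R) (theta : 'rV[R]_(d.-1)) a :=
  \sum_k F (theta 0 k) * eigval k a.

Lemma chanU_mulw F theta a : chanU t F theta *m w a = expi (phase F theta a) *: w a.
Proof.
pose A := 'i *: \sum_k (F (theta 0 k))%:C *: t k.
have hA b : A *m w b = (\row_a ('i * (phase F theta a)%:C)) 0 b *: w b.
  rewrite mxE -scalemxAl mulmx_suml.
  under eq_bigr do rewrite -scalemxAl eigvalP scalerA.
  rewrite -scaler_suml scalerA /phase rmorph_sum; congr (('i * _) *: _).
  by apply: eq_bigr => k _; rewrite rmorphM.
by rewrite /chanU -/A (diag_in_basis_eigen hA) mxexp_diag_in_basis diag_in_basis_mulw mxE.
Qed.

Local Notation amp := ((Num.sqrt (d%:R : R))^-1)%:C.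

Lemma mulmx_psi_sep {M : 'M[C]_d} {c : 'I_d -> C} :
  (forall a, M *m w a = c a *: w a) ->
  forall y, (M *m psi_sep w) y 0 = \sum_a (amp * c a) * w a y 0.
Proof.
move=> hM y; rewrite /psi_sep -scalemxAr mulmx_sumr mxE summxE big_distrr.
by apply: eq_bigr => a _; rewrite /= hM mxE mulrA.
Qed.

Lemma norm_amp_expi p : (amp * expi p)^*%C * (amp * expi p) = (d%:R^-1)%:C.
Proof.
rewrite conjc_realM mulrACA conjc_expiM mulr1 -rmorphM; congr _%:C.
by rewrite -invfM -expr2 sqr_sqrtr // ler0n.
Qed.

Definition phase_state (F : R -> R) (theta : 'rV[R]_(d.-1)) (y : 'I_d) : C :=
  \sum_a (amp * expi (phase F theta a)) * w a y 0.

Definition phase_state_deriv (F : R -> R) (dF : R) theta m (y : 'I_d) : C :=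
  \sum_a ('i * (dF * eigval m a)%:C * (amp * expi (phase F theta a))) * w a y 0.

Lemma chanU_psi_sep F theta y :
  (chanU t F theta *m psi_sep w) y 0 = phase_state F theta y.
Proof. exact: (mulmx_psi_sep (chanU_mulw F theta)). Qed.

Lemma is_cderive_phase_state (F : R -> R) (dF : R) (theta : 'rV[R]_(d.-1)) m y :
  is_derive (theta 0 m) 1 F dF ->
  is_cderive 0 (fun s => phase_state F (Defs.shift theta m s) y)
    (phase_state_deriv F dF theta m y).
Proof.
move=> hF; apply: is_cderive_sum => a.
have hexpi := is_cderive_expi (is_derive_shift_phase (fun k => eigval k a) hF).
apply: is_cderive_eq.
  exact: is_cderiveM (is_cderiveM (is_cderive_cst _ amp) hexpi) (is_cderive_cst _ (w a y 0)).
by rewrite /= shift0 /phase; ring.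
Qed.

Lemma pderiv_phase_state {F : R -> R} {dF : R} {theta : 'rV[R]_(d.-1)} {m} :
  is_derive (theta 0 m) 1 F dF ->
  pderiv (phase_state F) theta m = phase_state_deriv F dF theta m.
Proof. by move=> hF; apply: pderivE => y; apply: is_cderive_phase_state. Qed.

Hypothesis d_gt0 : (0 < d)%N.

Lemma braket_phase_state F theta : braket (phase_state F theta) (phase_state F theta) = 1.
Proof.
rewrite /phase_state braket_basis; under eq_bigr do rewrite norm_amp_expi.
rewrite sumr_const card_ord -rmorphMn -mulr_natr mulVf // pnatr_eq0 -lt0n //.
Qed.

Lemma braket_phase_state_deriv F dF theta m :
  braket (phase_state_deriv F dF theta m) (phase_state F theta) = 0.
Proof.
have coef (x : R) (z : C) : ('i * x%:C * z)^*%C * z = - 'i * x%:C * (z^*%C * z).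
  by rewrite conjc_iRM mulrA.
rewrite /phase_state /phase_state_deriv braket_basis.
under eq_bigr do rewrite coef norm_amp_expi.
rewrite -mulr_suml -mulr_sumr -rmorph_sum -mulr_sumr sum_eigval.
by rewrite mulr0 rmorph0 mulr0 mul0r.
Qed.

Lemma braket_phase_state_deriv2 F dF theta m :
  braket (phase_state_deriv F dF theta m) (phase_state_deriv F dF theta m)
  = (dF ^+ 2 / d%:R)%:C.
Proof.
have coef (x : R) (z : C) :
    ('i * x%:C * z)^*%C * ('i * x%:C * z) = x%:C * x%:C * (z^*%C * z).
  rewrite conjc_iRM.
  transitivity (- ('i * 'i) * (x%:C * x%:C) * (z^*%C * z)); first by ring.
  by rewrite -expr2 sqr_i opprK mul1r.
rewrite /phase_state_deriv braket_basis.
under eq_bigr do rewrite coef norm_amp_expi -!rmorphM.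
rewrite -rmorph_sum -mulr_suml; congr _%:C; congr (_ * _).
by under eq_bigr do rewrite -expr2 exprMn; rewrite -mulr_sumr sum_eigval_sqr mulr1.
Qed.

Lemma sld_qfi_phase_state {F : R -> R} {dF : R} {theta : 'rV[R]_(d.-1)} {m} :
  is_derive (theta 0 m) 1 F dF ->
  sld_qfi (phase_state F) theta m m = 4 * (dF ^+ 2 / d%:R).
Proof.
move=> hF.
rewrite (sld_qfi_diag (pderiv_phase_state hF) (braket_phase_state_deriv _ _ _ _)).
by rewrite braket_phase_state_deriv2.
Qed.

Section Schemes.
Variables (n : nat) (f : 'I_n -> R -> R).
Hypothesis f_derivable : forall j x, derivable (f j) x 1.

Lemma f_is_derive j (x : R) : is_derive x 1 (f j) (derive1 (f j) x).
Proof. by rewrite derive1E; apply: derivableP. Qed.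

Lemma out_parallel_prod : out_parallel t f w
  = fun theta (x : {ffun 'I_n -> 'I_d}) => \prod_j phase_state (f j) theta (x j).
Proof.
apply/funext => theta; apply/funext => x.
by apply: eq_bigr => j _; apply: chanU_psi_sep.
Qed.

Lemma out_sequential_sum : out_sequential t f w = phase_state (fun x => \sum_j f j x).
Proof.
apply/funext => theta; apply/funext => y; rewrite /out_sequential.
rewrite (mulmx_psi_sep (c := fun a => expi (phase (fun x => \sum_j f j x) theta a))) // => a.
rewrite (mulmx_prod_eigen (c := fun j => expi (phase (f (rev_ord j)) theta a))) => [|j].
  rewrite -expi_sum /phase exchange_big /=; congr (expi _ *: _).
  apply: eq_bigr => k _; rewrite -mulr_suml; congr (_ * _).
  by rewrite [RHS](reindex_inj rev_ord_inj).
exact: chanU_mulw.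
Qed.

Lemma trace_sld_qfi_parallel theta :
  \tr (sld_qfi (out_parallel t f w) theta)
    = 4 / d%:R * \sum_(k < d.-1) \sum_(j < n) (derive1 (f j) (theta 0 k)) ^+ 2.
Proof.
rewrite out_parallel_prod /mxtrace mulr_sumr; apply: eq_bigr => m _.
rewrite (sld_qfi_prod_diag (phi := fun j => phase_state (f j))
    (D := fun j => phase_state_deriv (f j) (derive1 (f j) (theta 0 m)) theta m)).
- under eq_bigr do rewrite braket_phase_state_deriv2 /=.
  by rewrite -mulr_suml; ring.
- by move=> j y; apply: is_cderive_phase_state; apply: f_is_derive.
- by move=> j; apply: braket_phase_state.
- by move=> j; apply: braket_phase_state_deriv.
Qed.

Lemma trace_sld_qfi_sequential theta :
  \tr (sld_qfi (out_sequential t f w) theta)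
    = 4 / d%:R * \sum_(k < d.-1) (\sum_(j < n) derive1 (f j) (theta 0 k)) ^+ 2.
Proof.
rewrite out_sequential_sum /mxtrace mulr_sumr; apply: eq_bigr => m _.
have hF : is_derive (theta 0 m) 1 (fun x => \sum_j f j x)
    (\sum_j derive1 (f j) (theta 0 m)).
  by have := is_derive_sum (fun j => f_is_derive j (theta 0 m)); rewrite fct_sumE.
by rewrite (sld_qfi_phase_state hF); ring.
Qed.

End Schemes.

End Generators.

End OrthonormalBasis.

End PhaseEncoding.

Theorem proposition4p4 (R : realType) (d n : nat)
    (t : 'I_(d.-1) -> 'M[R[i]]_d) (w : 'I_d -> 'cV[R[i]]_d)
    (f : 'I_n -> R -> R) (Theta : set 'rV[R]_(d.-1)) :
  (0 < d)%N ->
  (forall k, adjmx (t k) = t k) ->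
  (forall k, \tr (t k) = 0) ->
  (forall k l, \tr (t k *m t l) = (k == l)%:R) ->
  (forall k l, t k *m t l = t l *m t k) ->
  (forall a b, braket (fun r => w a r 0) (fun r => w b r 0) = (a == b)%:R) ->
  (forall k a, exists lam : R[i], t k *m w a = lam *: w a) ->
  (forall j x, derivable (f j) x 1) ->
  (forall j x, 0 < derive1 (f j) x) ->
  (forall theta, Theta theta -> forall k,
      0 <= \sum_(j < n) f j (theta 0 k) <= pi) ->
  forall theta, Theta theta ->
    \tr (sld_qfi (out_parallel t f w) theta)
      = 4 / d%:R * \sum_(k < d.-1) \sum_(j < n) (derive1 (f j) (theta 0 k)) ^+ 2
    /\
    \tr (sld_qfi (out_sequential t f w) theta)
      = 4 / d%:R * \sum_(k < d.-1) (\sum_(j < n) derive1 (f j) (theta 0 k)) ^+ 2.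
Proof.
move=> d_gt0 t_herm t_tr0 t_orth _ w_orth w_eigen f_der _ _ theta _.
by split; [apply: trace_sld_qfi_parallel | apply: trace_sld_qfi_sequential].
Qed.
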